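(* Let $\alpha\ge0$ and $\phi(x)=x(1-x)^{-\alpha}$, with Taylor coefficients $\phi_m=m(\alpha)_{m-1}$ at $0$. Then $\phi\in\mathcal S$ if and only if $\alpha\in[0,1]$.
   Context: $(a)_j=a(a+1)\cdots(a+j-1)$ denotes the Pochhammer symbol, with $(a)_0=1$. For $\phi(x)=\sum_{m\ge1}\phi_mx^m/m!$ with $\phi_m\ge0$, $\phi_1>0$ and radius of convergence $x_0\in(0,\infty]$ (here $x_0=1$), we write $\phi\in\mathcal S$ if $\phi$ is finite on the whole half-line $(-\infty,x_0)$ and $\phi'$ is absolutely monotone there, i.e. $\phi^{(n)}(x)\ge0$ for all $n\ge1$ and all $x<x_0$. *)

From Stdlib Require Import Reals.
From Coquelicot Require Import Coquelicot.
Open Scope R_scope.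

Fixpoint pochhammer (a : R) (j : nat) : R :=
  match j with
  | O => 1
  | S k => pochhammer a k * (a + INR k)
  end.

(* phi(x) = x (1-x)^(-alpha); only used on x < 1, where 1 - x > 0. *)
Definition phi_alpha (alpha : R) (x : R) : R := x * Rpower (1 - x) (- alpha).

(* Taylor coefficients phi_m = m (alpha)_(m-1) (phi = sum phi_m x^m / m!). *)
Definition phi_coef (alpha : R) (m : nat) : R :=
  INR m * pochhammer alpha (Nat.pred m).

(* Membership in the class S on (-oo, x0): phi is finite there (automatic for a
   real-valued function) and phi' is absolutely monotone there, i.e. for every
   n >= 1 and every x < x0 the n-th derivative phi^(n)(x) exists and is >= 0. *)
Definition in_class_S (phi : R -> R) (x0 : R) : Prop :=
  forall (n : nat) (x : R), (1 <= n)%nat -> x < x0 ->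
    ex_derive_n phi n x /\ 0 <= Derive_n phi n x.

(* Since x = 1 - (1 - x), phi = (1-x)^(-alpha) - (1-x)^(1-alpha), and the n-th derivative
   of (1-x)^(-b) is (b)_n (1-x)^(-b-n).  Using (alpha-1)_(n+1) = (alpha-1) (alpha)_n this gives
     phi^(n+1)(x) = (alpha)_n (n + 1 + (alpha - 1) x) (1-x)^(-alpha-n-1).
   For alpha <= 1 the middle factor is positive on x < 1; for alpha > 1 it is negative
   for n = 0 and x = -2/(alpha-1). *)
From Stdlib Require Import Reals Lra Lia Psatz.
From Coquelicot Require Import Coquelicot.
Open Scope R_scope.

Lemma pochhammer_nonneg (a : R) (n : nat) : 0 <= a -> 0 <= pochhammer a n.
Proof.
  intros Ha. induction n as [|n IH]; simpl; [lra|].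
  apply Rmult_le_pos; [exact IH|]. pose proof (pos_INR n). lra.
Qed.

Lemma pochhammer_pred_S (a : R) (n : nat) :
  pochhammer (a - 1) (S n) = (a - 1) * pochhammer a n.
Proof.
  induction n as [|n IH]; [simpl; ring|].
  change (pochhammer (a - 1) (S n) * (a - 1 + INR (S n))
          = (a - 1) * (pochhammer a n * (a + INR n))).
  rewrite IH, S_INR. ring.
Qed.

Lemma Derive_n_chain (U : R -> Prop) (f : R -> R) (g : nat -> R -> R) :
  open U ->
  (forall x, U x -> f x = g O x) ->
  (forall n x, U x -> is_derive (g n) x (g (S n) x)) ->
  forall n x, U x -> ex_derive_n f n x /\ Derive_n f n x = g n x.
Proof.
  intros HU Hf Hg n. induction n as [|n IH]; intros x Hx.
  - split; [exact I | exact (Hf x Hx)].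
  - assert (Hd : is_derive (Derive_n f n) x (g (S n) x)).
    { apply (is_derive_ext_loc (g n)); [|exact (Hg n x Hx)].
      apply (filter_imp U); [|exact (HU x Hx)].
      intros t Ht. symmetry. exact (proj2 (IH t Ht)). }
    split; [exists (g (S n) x); exact Hd | exact (is_derive_unique _ _ _ Hd)].
Qed.

Definition one_minus_pow_chain (b : R) (n : nat) (x : R) : R :=
  pochhammer b n * Rpower (1 - x) (- b - INR n).

Lemma is_derive_one_minus_pow_chain (b : R) (n : nat) (x : R) : x < 1 ->
  is_derive (one_minus_pow_chain b n) x (one_minus_pow_chain b (S n) x).
Proof.
  intros Hx. unfold one_minus_pow_chain, Rpower.
  auto_derive; [lra|].
  rewrite S_INR.
  replace ((- b - (INR n + 1)) * ln (1 - x))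
    with ((- b - INR n) * ln (1 - x) + - ln (1 - x)) by ring.
  rewrite exp_plus, exp_Ropp, exp_ln by lra.
  replace (1 + - x) with (1 - x) by ring.
  simpl. field. lra.
Qed.

Lemma phi_alpha_pow_chain (alpha x : R) : x < 1 ->
  phi_alpha alpha x = one_minus_pow_chain alpha O x - one_minus_pow_chain (alpha - 1) O x.
Proof.
  intros Hx. unfold phi_alpha, one_minus_pow_chain. simpl.
  replace (- (alpha - 1) - 0) with (- alpha + 1) by ring.
  replace (- alpha - 0) with (- alpha) by ring.
  rewrite Rpower_plus, Rpower_1 by lra. ring.
Qed.

Lemma Derive_n_phi_alpha (alpha : R) (n : nat) (x : R) : x < 1 ->
  ex_derive_n (phi_alpha alpha) n x /\
  Derive_n (phi_alpha alpha) n x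
  = one_minus_pow_chain alpha n x - one_minus_pow_chain (alpha - 1) n x.
Proof.
  apply (Derive_n_chain (fun t => t < 1) _
           (fun k t => one_minus_pow_chain alpha k t - one_minus_pow_chain (alpha - 1) k t));
    [apply open_lt | apply phi_alpha_pow_chain |].
  intros k t Ht. apply @is_derive_minus; apply is_derive_one_minus_pow_chain, Ht.
Qed.

Lemma Derive_n_S_phi_alpha (alpha : R) (n : nat) (x : R) : x < 1 ->
  Derive_n (phi_alpha alpha) (S n) x
  = pochhammer alpha n * (INR (S n) + (alpha - 1) * x) * Rpower (1 - x) (- alpha - INR (S n)).
Proof.
  intros Hx. rewrite (proj2 (Derive_n_phi_alpha alpha (S n) x Hx)).
  unfold one_minus_pow_chain. rewrite pochhammer_pred_S.
  replace (- (alpha - 1) - INR (S n)) with ((- alpha - INR (S n)) + 1) by ring.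
  rewrite Rpower_plus, Rpower_1 by lra.
  change (pochhammer alpha (S n)) with (pochhammer alpha n * (alpha + INR n)).
  rewrite S_INR. ring.
Qed.

Lemma Rpower_gt0 (x y : R) : 0 < Rpower x y.
Proof. apply exp_pos. Qed.

Theorem proposition14 (alpha : R) (Halpha : 0 <= alpha) :
  in_class_S (phi_alpha alpha) 1 <-> (0 <= alpha /\ alpha <= 1).
Proof.
  split.
  - intros HS. split; [exact Halpha|].
    apply Rnot_lt_le. intros Hgt.
    set (x := - 2 / (alpha - 1)).
    assert (Hx : x < 0) by (apply Rdiv_neg_pos; lra).
    destruct (HS 1%nat x (le_n 1) ltac:(lra)) as [_ Hnonneg].
    rewrite Derive_n_S_phi_alpha in Hnonneg by lra.
    assert (Hmid : INR 1 + (alpha - 1) * x = -1) by (unfold x; simpl; field; lra).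
    rewrite Hmid in Hnonneg. simpl pochhammer in Hnonneg.
    pose proof (Rpower_gt0 (1 - x) (- alpha - INR 1)). nra.
  - intros [_ Hle] n x Hn Hx.
    split; [exact (proj1 (Derive_n_phi_alpha alpha n x Hx))|].
    destruct n as [|n]; [lia|].
    rewrite Derive_n_S_phi_alpha by exact Hx.
    apply Rmult_le_pos; [apply Rmult_le_pos|apply Rlt_le, Rpower_gt0].
    + apply pochhammer_nonneg, Halpha.
    + rewrite S_INR. pose proof (pos_INR n).
      destruct (Rle_lt_dec 0 x); nra.
Qed.
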